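(* Consider the Normal Partizan Domination game on a star $K_{1,n}$ with $n\geq 2$, whose universal (center) vertex has color $A$, with $a$ leaves of color $A$ and $b=n-a$ leaves of color $B$. Its value is: $a-b$ if $b<a$; $1/2^{b-a+1}$ if $b\geq a\geq 1$; $(b-1)\cdot\uparrow *$ if $b$ is odd and $a=0$; $(b-1)\cdot\uparrow$ if $b$ is even and $a=0$. If instead the universal vertex has color $B$, the value is $-J$, where $J$ is the value of the game obtained by interchanging the colors $A$ and $B$ on all vertices.
   Context: Normal Partizan Domination game: a finite graph $G$ has each vertex colored $A$, $B$ or $C$. Alice and Bob alternately select a vertex; Alice may only select vertices colored $A$ or $C$, Bob only vertices colored $B$ or $C$. A vertex $u$ dominates $v$ if $u=v$ or $uv$ is an edge. A vertex may be selected only if it is playable, i.e. it dominates at least one vertex not dominated by the previously selected vertices; the game ends when the selected vertices form a dominating set. Under normal play the player unable to move loses. The game is regarded as a partizan combinatorial game with Alice as Left and Bob as Right, and its value is its value in Conway's combinatorial game theory ($\{X\mid Y\}$ has Left options $X$ and Right options $Y$; $G+H$ is the disjunctive sum; $-G$ swaps Left and Right; $G=H$ iff $G+(-H)$ is a second-player win). Notation: integers and dyadic rationals $1/2^k$ are the usual number games; $*=\{0\mid 0\}$; $\uparrow=\{0\mid *\}$; $m\cdot\uparrow$ is the sum of $m$ copies of $\uparrow$ (and $0\cdot\uparrow=0$); $J*$ denotes $J+*$. *)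

From HB Require Import structures.
From mathcomp Require Import all_boot.
Set Implicit Arguments. Unset Strict Implicit. Unset Printing Implicit Defensive.

(* Game L R : L = Left (Alice) options, R = Right (Bob) options. *)
Inductive game : Type := Game : seq game -> seq game -> game.

Definition lopts (G : game) := let: Game l _ := G in l.
Definition ropts (G : game) := let: Game _ r := G in r.

Fixpoint neg (G : game) : game :=
  let: Game l r := G in Game (map neg r) (map neg l).

Fixpoint add (G H : game) {struct G} : game :=
  let fix addH (H : game) : game :=
    match G, H with
    | Game gl gr, Game hl hr =>
        Game (map (fun g => add g H) gl ++ map addH hl)
             (map (fun g => add g H) gr ++ map addH hr)
    end
  in addH H.

(* outcome under normal play: (Left wins moving first, Right wins moving first) *)
Fixpoint outc (G : game) : bool * bool :=
  let: Game l r := G in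
  (has (fun g => ~~ (outc g).2) l, has (fun g => ~~ (outc g).1) r).

Definition second_player_win (G : game) : bool := ~~ (outc G).1 && ~~ (outc G).2.

Definition game_eq (G H : game) : Prop := second_player_win (add G (neg H)).

Definition zero : game := Game [::] [::].
Definition star : game := Game [:: zero] [:: zero].
Definition up : game := Game [:: zero] [:: star].

Fixpoint nat_game (k : nat) : game :=
  if k is k'.+1 then Game [:: nat_game k'] [::] else zero.

Fixpoint half_pow (k : nat) : game :=
  if k is k'.+1 then Game [:: zero] [:: half_pow k'] else nat_game 1.

Definition mul_up (m : nat) : game := iter m (add up) zero.

Inductive color := colA | colB | colC.
Definition color_eqb (c d : color) : bool :=
  match c, d with colA, colA | colB, colB | colC, colC => true | _, _ => false end.
Lemma color_eqP : Equality.axiom color_eqb.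
Proof. by case; case; constructor. Qed.
HB.instance Definition _ := hasDecEq.Build color color_eqP.

Section Domination.
Variables (T : finType) (adj : rel T) (col : T -> color).

Definition cnbh (v : T) : {set T} := [set u | (u == v) || adj v u].

Definition playable (D : {set T}) (v : T) : bool := ~~ (cnbh v \subset D).

Definition alice_col (v : T) : bool := col v != colB.
Definition bob_col (v : T) : bool := col v != colA.

(* position with dominated set D; k is fuel (each move strictly enlarges D,
   so fuel #|T| is never exhausted before the game ends) *)
Fixpoint dom_pos (k : nat) (D : {set T}) : game :=
  if k is k'.+1 then
    Game [seq dom_pos k' (D :|: cnbh v) | v <- enum T & alice_col v && playable D v]
         [seq dom_pos k' (D :|: cnbh v) | v <- enum T & bob_col v && playable D v]
  else zero.

Definition dom_game : game := dom_pos #|T| set0.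
End Domination.

Definition star_adj (n : nat) : rel 'I_n.+1 :=
  fun i j => (i == ord0) != (j == ord0).

Definition swap_col (c : color) : color :=
  match c with colA => colB | colB => colA | colC => colC end.

Definition leaf_count (n : nat) (col : 'I_n.+1 -> color) (c : color) : nat :=
  #|[set i : 'I_n.+1 | (i != ord0) && (col i == c)]|.

(* Every game involved is abstracted by a small arithmetic state.  A star
   position is described by the numbers (x, y) of undominated A- and B-leaves:
   Left removes an A-leaf or plays the center, which ends the game, and Right
   removes a B-leaf.  The comparison games k, 1/2^j and u.up + v.star are
   described by their parameters.  A relation between game trees and states
   that matches options with state moves in both directions turns questions
   about the trees into questions about the states.  The difference D - X is
   then shown to be a second-player win by giving, for each first mover, a set
   of states that contains the start and to which the opponent can always
   return; these sets are explicit linear conditions (with a parity condition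
   for ups and stars).  When the center is colored B, swapping the colors
   negates the game, and G - G = 0 by the mirror strategy. *)

From mathcomp Require Import all_boot zify.

Set Implicit Arguments.
Unset Strict Implicit.
Unset Printing Implicit Defensive.

Definition opts (b : bool) (G : game) : seq game := if b then lopts G else ropts G.

Definition first_wins (b : bool) (G : game) : bool := if b then (outc G).1 else (outc G).2.

Lemma first_winsE b G :
  first_wins b G = has (fun g => ~~ first_wins (~~ b) g) (opts b G).
Proof. by case: G; case: b. Qed.

Lemma opts_neg b G : opts b (neg G) = map neg (opts (~~ b) G).
Proof. by case: G; case: b. Qed.

Lemma opts_add b G H :
  opts b (add G H) = map (add^~ H) (opts b G) ++ map (add G) (opts b H).
Proof. by case: G; case: H; case: b. Qed.

Lemma In_opts_add b G H g :
  List.In g (opts b (add G H)) <->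
  (exists2 g1, List.In g1 (opts b G) & g = add g1 H) \/
  (exists2 h1, List.In h1 (opts b H) & g = add G h1).
Proof.
rewrite opts_add List.in_app_iff !List.in_map_iff.
by split=> [[] [x [<- ?]]|[] [x ? ->]]; [left|right|left|right]; exists x.
Qed.

Fixpoint game_ind_opts (P : game -> Prop)
    (IH : forall G, (forall b g, List.In g (opts b G) -> P g) -> P G) (G : game) : P G :=
  let fix all_in (s : seq game) : forall g, List.In g s -> P g :=
    match s with
    | [::] => fun g (hg : False) => False_ind (P g) hg
    | h :: t => fun g hg =>
        match hg with
        | or_introl e => eq_ind h P (game_ind_opts IH h) g e
        | or_intror ht => all_in t g ht
        end
    end in
  let: Game l r := G in IH (Game l r) (fun b =>
    if b as b return forall g, List.In g (opts b (Game l r)) -> P g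
    then all_in l else all_in r).

Lemma hasP_In (T : Type) (p : pred T) (s : seq T) :
  reflect (exists2 x, List.In x s & p x) (has p s).
Proof.
elim: s => [|x s IH] /=; first by right; case.
case: (boolP (p x)) => px; first by left; exists x; [left|].
apply: (iffP IH) => [[y ys py]|[y [<-|ys] py]]; [by exists y; [right|] | by rewrite py in px |].
by exists y.
Qed.

Section Simulation.
Variables (S : Type) (Rep : game -> S -> Prop) (mv : bool -> S -> S -> Prop).

Definition simulates :=
  forall b G s, Rep G s ->
    (forall g, List.In g (opts b G) -> exists2 s', mv b s s' & Rep g s') /\
    (forall s', mv b s s' -> exists2 g, List.In g (opts b G) & Rep g s').

Definition reply_closed (b : bool) (Q : S -> Prop) :=
  forall s s', Q s -> mv b s s' -> exists2 s'', mv (~~ b) s' s'' & Q s''.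

Hypothesis sim : simulates.

Lemma reply_closed_first_loses b Q G s :
  reply_closed b Q -> Rep G s -> Q s -> ~~ first_wins b G.
Proof.
move=> closedQ; move: G s.
pose answered s' := exists2 s'', mv (~~ b) s' s'' & Q s''.
suff key : forall G, (forall s, Rep G s -> Q s -> ~~ first_wins b G) /\
                       (forall s', Rep G s' -> answered s' -> first_wins (~~ b) G).
  by move=> G; apply: (key G).1.
elim/game_ind_opts => G IH; split.
- move=> s repG Qs; rewrite first_winsE; apply/hasP_In => -[g gG /negP []].
  have [s' mvs' repg] := (sim b repG).1 g gG.
  exact: (IH b g gG).2 repg (closedQ s s' Qs mvs').
- move=> s' repG [s'' mvs'' Qs''].
  have [g gG repg] := (sim (~~ b) repG).2 s'' mvs''.
  rewrite first_winsE; apply/hasP_In; exists g => //; rewrite negbK.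
  exact: (IH _ g gG).1 repg Qs''.
Qed.

Lemma simulated_second_player_win QL QR G s :
  reply_closed true QL -> reply_closed false QR -> Rep G s -> QL s -> QR s ->
  second_player_win G.
Proof.
move=> closedL closedR repG QLs QRs; apply/andP; split.
- exact: reply_closed_first_loses closedL repG QLs.
- exact: reply_closed_first_loses closedR repG QRs.
Qed.

End Simulation.

Section Combinators.
Variables (S1 S2 : Type) (R1 : game -> S1 -> Prop) (R2 : game -> S2 -> Prop).
Variables (mv1 : bool -> S1 -> S1 -> Prop) (mv2 : bool -> S2 -> S2 -> Prop).

Definition sum_rep G (s : S1 * S2) := exists G1 G2, [/\ G = add G1 G2, R1 G1 s.1 & R2 G2 s.2].

Definition sum_mv b (s s' : S1 * S2) :=
  (mv1 b s.1 s'.1 /\ s'.2 = s.2) \/ (s'.1 = s.1 /\ mv2 b s.2 s'.2).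

Lemma simulates_add : simulates R1 mv1 -> simulates R2 mv2 -> simulates sum_rep sum_mv.
Proof.
move=> sim1 sim2 b G [s1 s2] [G1 [G2 [-> /= rep1 rep2]]]; split.
- move=> g /In_opts_add [[g1 g1G ->]|[g2 g2G ->]].
  + have [s1' ? ?] := (sim1 b _ _ rep1).1 g1 g1G.
    by exists (s1', s2); [left | exists g1, G2].
  + have [s2' ? ?] := (sim2 b _ _ rep2).1 g2 g2G.
    by exists (s1, s2'); [right | exists G1, g2].
- move=> [s1' s2'] [[/= mvs1 ->]|[/= -> mvs2]].
  + have [g1 g1G ?] := (sim1 b _ _ rep1).2 s1' mvs1.
    by exists (add g1 G2); [apply/In_opts_add; left; exists g1 | exists g1, G2].
  + have [g2 g2G ?] := (sim2 b _ _ rep2).2 s2' mvs2.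
    by exists (add G1 g2); [apply/In_opts_add; right; exists g2 | exists G1, g2].
Qed.

Definition neg_rep G s := exists2 G1, G = neg G1 & R1 G1 s.

Definition neg_mv b := mv1 (~~ b).

Lemma simulates_neg : simulates R1 mv1 -> simulates neg_rep neg_mv.
Proof.
move=> sim1 b G s [G1 -> rep1]; split.
- move=> g; rewrite opts_neg => /List.in_map_iff [g1 [<- g1G]].
  by have [s' ? ?] := (sim1 _ _ _ rep1).1 g1 g1G; exists s' => //; exists g1.
- move=> s' mvs'; have [g1 g1G ?] := (sim1 _ _ _ rep1).2 s' mvs'.
  by exists (neg g1); [rewrite opts_neg; apply: List.in_map | exists g1].
Qed.

End Combinators.

Definition opts_mv b (G G' : game) := List.In G' (opts b G).

Lemma simulates_eq : simulates eq opts_mv.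
Proof. by move=> b G _ <-; split=> g; exists g. Qed.

Lemma second_player_win_sub_self G : second_player_win (add G (neg G)).
Proof.
have sim := simulates_add simulates_eq (simulates_neg simulates_eq).
have closed b : reply_closed (sum_mv opts_mv (neg_mv opts_mv)) b (fun s => s.1 = s.2).
  move=> [G1 _] [G2 G3] /= <- [[/= mv1 ->]|[/= -> mv2]].
  - by exists (G2, G2) => //; right; rewrite /neg_mv negbK.
  - by exists (G3, G3) => //; left; rewrite /neg_mv in mv2.
apply: (simulated_second_player_win sim (closed true) (closed false) (s := (G, G))) => //.
by exists G, (neg G); split => //; exists G.
Qed.

Definition nat_rep G k := G = nat_game k.

Definition nat_mv (b : bool) (k k' : nat) := b /\ k = k'.+1.

Lemma simulates_nat : simulates nat_rep nat_mv.
Proof.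
move=> b G [|k] -> ; split=> [g|k']; first by case: b.
- by case=> _.
- by case: b => //= -[<- // | []]; exists k.
- by case=> bT [<-]; exists (nat_game k) => //; rewrite bT; left.
Qed.

(* State [0] stands for the game 0 and state [j.+1] for 1/2^j. *)
Definition half_rep G (h : nat) := G = if h is j.+1 then half_pow j else zero.

Definition half_mv (b : bool) (h h' : nat) := if b then 0 < h /\ h' = 0 else 1 < h /\ h' = h.-1.

Lemma simulates_half : simulates half_rep half_mv.
Proof.
move=> b G [|[|j]] ->; split=> [g|h']; case: b => //=; try by case.
- by case=> // <-; exists 0.
- by case=> _ ->; exists zero => //; left.
- by case=> // <-; exists 0.
- by case=> // <-; exists j.+1.
- by case=> _ ->; exists zero => //; left.
- by case=> _ ->; exists (half_pow j) => //; left.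
Qed.

Inductive upstar_rep : game -> nat * nat -> Prop :=
  | upstar_zero : upstar_rep zero (0, 0)
  | upstar_up : upstar_rep up (1, 0)
  | upstar_star : upstar_rep star (0, 1)
  | upstar_add G H s t : upstar_rep G s -> upstar_rep H t ->
      upstar_rep (add G H) (s.1 + t.1, s.2 + t.2).

(* Since up = {0 | star}, Left turns an up into 0 and Right turns it into a star. *)
Definition upstar_mv (b : bool) (s s' : nat * nat) :=
  (0 < s.1 /\ s'.1 = s.1.-1 /\ s'.2 = (if b then s.2 else s.2.+1)) \/
  (0 < s.2 /\ s'.1 = s.1 /\ s'.2 = s.2.-1).

Lemma upstar_mv_addl b s s' t :
  upstar_mv b s s' -> upstar_mv b (s.1 + t.1, s.2 + t.2) (s'.1 + t.1, s'.2 + t.2).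
Proof. by case: b; rewrite /upstar_mv /=; lia. Qed.

Lemma upstar_mv_addr b s t t' :
  upstar_mv b t t' -> upstar_mv b (s.1 + t.1, s.2 + t.2) (s.1 + t'.1, s.2 + t'.2).
Proof. by case: b; rewrite /upstar_mv /=; lia. Qed.

Lemma upstar_mv_addP b s t s' :
  upstar_mv b (s.1 + t.1, s.2 + t.2) s' ->
  (exists2 s1, upstar_mv b s s1 & s' = (s1.1 + t.1, s1.2 + t.2)) \/
  (exists2 t1, upstar_mv b t t1 & s' = (s.1 + t1.1, s.2 + t1.2)).
Proof.
case: s t s' => [x y] [u v] [x' y']; rewrite {1}/upstar_mv /= => -[] [pos [-> ->]];
  [case: (posnP x) => x0 | case: (posnP y) => y0];
  [right; exists (u.-1, if b then v else v.+1) | left; exists (x.-1, if b then y else y.+1)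
  | right; exists (u, v.-1) | left; exists (x, y.-1)];
  by case: b; rewrite /upstar_mv /=; try congr pair; lia.
Qed.

Lemma upstar_rep_mul_up m : upstar_rep (mul_up m) (m, 0).
Proof. by elim: m => [|m IH]; [apply: upstar_zero | apply: (upstar_add upstar_up IH)]. Qed.

Lemma simulates_upstar : simulates upstar_rep upstar_mv.
Proof.
move=> b G s rep; elim: rep b => {G s} [b | b | b | G H s t repG IHG repH IHH b].
- by split=> [g|s' [] []]; case: b.
- have -> : opts b up = [:: if b then zero else star] by case: b.
  split=> [g [<-|//]|[x' y'] [[_ [/= -> ->]]|[]//]].
  + by exists (0, if b then 0 else 1); [left | case: b; constructor].
  + by exists (if b then zero else star); [left | case: b; constructor].
- have -> : opts b star = [:: zero] by case: b.
  split=> [g [<-|//]|[x' y'] [[]//|[_ [/= -> ->]]]].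
  + by exists (0, 0); [right | constructor].
  + by exists zero; [left | constructor].
- split=> [g /In_opts_add[[g1 g1G ->]|[h1 h1H ->]] | s' /upstar_mv_addP[[s1 mvs ->]|[t1 mvt ->]]].
  + have [s1 mvs rep1] := (IHG b).1 g1 g1G.
    by exists (s1.1 + t.1, s1.2 + t.2); [apply: upstar_mv_addl | apply: upstar_add].
  + have [t1 mvt rep1] := (IHH b).1 h1 h1H.
    by exists (s.1 + t1.1, s.2 + t1.2); [apply: upstar_mv_addr | apply: upstar_add].
  + have [g1 g1G rep1] := (IHG b).2 s1 mvs.
    by exists (add g1 H); [apply/In_opts_add; left; exists g1 | apply: upstar_add].
  + have [h1 h1H rep1] := (IHH b).2 t1 mvt.
    by exists (add G h1); [apply/In_opts_add; right; exists h1 | apply: upstar_add].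
Qed.

Lemma InP (T : eqType) (x : T) (s : seq T) : reflect (List.In x s) (x \in s).
Proof.
elim: s => [|y s IH] /=; first by right.
rewrite inE; apply: (iffP orP) => [[/eqP ->|/IH]|[->|/IH ->]];
  by [left | right | rewrite eqxx | rewrite orbT].
Qed.

Section DominationGame.
Variables (T : finType) (adj : rel T).

Lemma neg_dom_pos_swap (col : T -> color) k D :
  neg (dom_pos adj (swap_col \o col) k D) = dom_pos adj col k D.
Proof.
elim: k D => [//|k IH] D /=; rewrite -!map_comp.
have swap_mover (v : T) : alice_col (swap_col \o col) v = bob_col col v /\
                          bob_col (swap_col \o col) v = alice_col col v.
  by rewrite /alice_col /bob_col /=; case: (col v).
congr Game; [under eq_filter => v do rewrite (swap_mover v).2
             | under eq_filter => v do rewrite (swap_mover v).1];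
  by apply: eq_map => v /=; rewrite IH.
Qed.

Definition may_select (col : T -> color) (b : bool) (v : T) :=
  if b then alice_col col v else bob_col col v.

Lemma opts_dom_pos (col : T -> color) b k D :
  opts b (dom_pos adj col k.+1 D) =
  [seq dom_pos adj col k (D :|: cnbh adj v) | v <- enum T & may_select col b v && playable adj D v].
Proof. by case: b. Qed.

Lemma In_opts_dom_pos (col : T -> color) b k D g :
  List.In g (opts b (dom_pos adj col k.+1 D)) <->
  exists v, [/\ may_select col b v, playable adj D v
              & g = dom_pos adj col k (D :|: cnbh adj v)].
Proof.
rewrite opts_dom_pos List.in_map_iff; split=> [[v [<- /InP]]|[v [mv pv ->]]].
  by rewrite mem_filter mem_enum andbT => /andP[]; exists v.
by exists v; split => //; apply/InP; rewrite mem_filter mem_enum mv pv.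
Qed.

End DominationGame.

Section Star.
Variable n : nat.
Local Notation V := 'I_n.+1.
Local Notation adj := (@star_adj n).

Lemma cnbh_center : cnbh adj ord0 = setT.
Proof. by apply/setP => u; rewrite !inE /star_adj eqxx; case: (u == ord0). Qed.

Lemma cnbh_leaf (v : V) : v != ord0 -> cnbh adj v = [set v; ord0].
Proof.
move=> v0; apply/setP => u; rewrite !inE /star_adj (negbTE v0) /=.
by case: (u == ord0); rewrite ?orbT ?orbF.
Qed.

Lemma playable_center (D : {set V}) : playable adj D ord0 = (D != setT).
Proof. by rewrite /playable cnbh_center subTset. Qed.

(* The positions that occur: nothing played yet, or the center dominated; the
   fuel [k] of [dom_pos] must cover the undominated vertices. *)
Definition star_pos k (D : {set V}) := ((D == set0) || (ord0 \in D)) && (#|~: D| <= k).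

Lemma playable_leaf k (D : {set V}) (v : V) :
  star_pos k D -> v != ord0 -> playable adj D v = (v \notin D).
Proof.
case/andP => /orP[/eqP -> | D0] _ v0; rewrite /playable cnbh_leaf // subUset !sub1set.
  by rewrite !inE.
by rewrite D0 andbT.
Qed.

Lemma star_pos_fuel k (D : {set V}) (v : V) : star_pos k D -> v \notin D -> 0 < k.
Proof.
case/andP => _ fuel vD; apply: leq_trans fuel; apply/card_gt0P; exists v; by rewrite in_setC.
Qed.

Lemma star_pos_leaf k (D : {set V}) (v : V) :
  star_pos k.+1 D -> v != ord0 -> v \notin D -> star_pos k (D :|: cnbh adj v).
Proof.
move=> /andP[_ fuel] v0 vD; rewrite cnbh_leaf // /star_pos !inE eqxx !orbT /=.
have sub : ~: (D :|: [set v; ord0]) \subset (~: D) :\ v.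
  by apply/subsetP => u; rewrite !inE => /norP[-> /norP[-> _]].
apply: leq_trans (subset_leq_card sub) _.
by move: fuel; rewrite (cardsD1 v (~: D)) in_setC vD add1n ltnS.
Qed.

Lemma star_pos_undominated_leaf k (D : {set V}) :
  0 < n -> star_pos k D -> D != setT -> exists2 u : V, u != ord0 & u \notin D.
Proof.
move=> n_gt0 /andP[/orP[/eqP -> | D0] _] DT.
  by exists (inord 1); [apply/eqP => /(congr1 val); rewrite /= inordK | rewrite inE].
have /subsetPn[u _ uD] : ~~ (setT \subset D) by rewrite subTset.
by exists u => //; apply: contraNneq uD => ->.
Qed.

Variable col : V -> color.
Hypothesis center_A : col ord0 = colA.
Hypothesis leaf_AB : forall i : V, i != ord0 -> (col i == colA) || (col i == colB).

Definition leaves_left (c : color) (D : {set V}) :=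
  #|[set i : V | (i != ord0) && (col i == c) && (i \notin D)]|.

Definition star_state (D : {set V}) := (leaves_left colA D, leaves_left colB D).

Definition side_col (b : bool) := if b then colA else colB.

Lemma leaves_left_side b (D : {set V}) :
  leaves_left (side_col b) D = if b then (star_state D).1 else (star_state D).2.
Proof. by case: b. Qed.

Lemma leaves_left_gt0P c (D : {set V}) :
  reflect (exists v : V, [/\ v != ord0, col v == c & v \notin D]) (0 < leaves_left c D).
Proof.
apply: (iffP card_gt0P) => [[v]|[v [v0 cv vD]]]; last by exists v; rewrite inE v0 cv vD.
by rewrite inE => /andP[/andP[? ?] ?]; exists v.
Qed.

Lemma leaves_left_leaf c (D : {set V}) (v : V) : v != ord0 -> v \notin D ->
  leaves_left c (D :|: cnbh adj v) = leaves_left c D - (col v == c).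
Proof.
move=> v0 vD; rewrite /leaves_left cnbh_leaf //.
set L := [set i : V | _ && _ && (i \notin D)].
have -> : [set i : V | (i != ord0) && (col i == c) && (i \notin D :|: [set v; ord0])] = L :\ v.
  apply/setP => u; rewrite !inE.
  case: (eqVneq u v) => [->|_]; first by rewrite orbT andbF.
  by case: (u == ord0); rewrite ?andbF ?orbF.
by rewrite (cardsD1 v L) inE v0 vD andbT; case: (col v == c); rewrite ?subn0 ?add1n ?subn1.
Qed.

Lemma may_select_leaf b (v : V) : v != ord0 -> may_select col b v = (col v == side_col b).
Proof.
by move=> /leaf_AB; rewrite /may_select /alice_col /bob_col; case: b; case: (col v).
Qed.

Lemma may_select_center b : may_select col b ord0 = b.
Proof. by rewrite /may_select /alice_col /bob_col center_A; case: b. Qed.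

Lemma star_state_gt0P (D : {set V}) :
  reflect (exists2 u : V, u != ord0 & u \notin D) (0 < (star_state D).1 + (star_state D).2).
Proof.
apply: (iffP idP) => [|[u u0 uD]].
  rewrite addn_gt0 => /orP[] /leaves_left_gt0P[u [u0 _ uD]]; by exists u.
have : 0 < leaves_left (col u) D by apply/leaves_left_gt0P; exists u.
by case/orP: (leaf_AB u0) => /eqP -> /=; rewrite addn_gt0 => ->; rewrite ?orbT.
Qed.

Definition star_rep G (s : nat * nat) :=
  exists k D, [/\ G = dom_pos adj col k D, star_pos k D & s = star_state D].

Definition star_mv (b : bool) (s s' : nat * nat) :=
  (0 < (if b then s.1 else s.2) /\
   s'.1 = (if b then s.1.-1 else s.1) /\ s'.2 = (if b then s.2 else s.2.-1)) \/
  (b /\ 0 < s.1 + s.2 /\ s'.1 = 0 /\ s'.2 = 0).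

Lemma star_rep_setT k : star_rep (dom_pos adj col k setT) (0, 0).
Proof.
exists k, setT; split => //; first by rewrite /star_pos inE orbT setCT cards0.
have none c : leaves_left c setT = 0.
  by apply/eqP; rewrite cards_eq0; apply/eqP/setP => u; rewrite !inE andbF.
by rewrite /star_state !none.
Qed.

Lemma star_rep_leaf b k (D : {set V}) (v : V) :
  star_pos k.+1 D -> v != ord0 -> v \notin D -> col v = side_col b ->
  star_rep (dom_pos adj col k (D :|: cnbh adj v))
           (if b then (star_state D).1.-1 else (star_state D).1,
            if b then (star_state D).2 else (star_state D).2.-1).
Proof.
move=> Dpos v0 vD cv; exists k, (D :|: cnbh adj v); split; first by [].
  exact: star_pos_leaf.
by rewrite /star_state !leaves_left_leaf // cv; case: {cv} b; rewrite /= ?subn0 ?subn1.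
Qed.

Lemma simulates_star : 0 < n -> simulates star_rep star_mv.
Proof.
move=> n_gt0 b G s [k [D [-> Dpos ->]]]; split.
- case: k Dpos => [|k] Dpos g; first by case: b.
  case/In_opts_dom_pos => v [selv playv ->].
  case: (eqVneq v ord0) selv playv => [-> | v0] selv playv.
  + rewrite may_select_center in selv; rewrite playable_center in playv.
    exists (0, 0); last by rewrite cnbh_center setUT; apply: star_rep_setT.
    right; do !split => //; apply/star_state_gt0P.
    exact: star_pos_undominated_leaf n_gt0 Dpos playv.
  + rewrite may_select_leaf // in selv; rewrite (playable_leaf Dpos v0) in playv.
    eexists; last exact: star_rep_leaf Dpos v0 playv (eqP selv).
    by left; split => //; rewrite -leaves_left_side; apply/leaves_left_gt0P; exists v.
- case=> x' y' [[/= side [-> ->]] | [bT [/star_state_gt0P[u u0 uD] /= [-> ->]]]].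
  + rewrite -leaves_left_side in side; have /leaves_left_gt0P[v [v0 cv vD]] := side.
    case: k Dpos (star_pos_fuel Dpos vD) => // k Dpos _.
    eexists; last exact: star_rep_leaf Dpos v0 vD (eqP cv).
    apply/In_opts_dom_pos; exists v.
    by rewrite may_select_leaf // (playable_leaf Dpos v0).
  + case: k Dpos (star_pos_fuel Dpos uD) => // k Dpos _.
    exists (dom_pos adj col k setT); last exact: star_rep_setT.
    apply/In_opts_dom_pos; exists ord0.
    rewrite may_select_center playable_center cnbh_center setUT; split => //.
    by apply: contraNneq uD => ->; rewrite inE.
Qed.

Lemma star_rep_dom_game : star_rep (dom_game adj col) (leaf_count col colA, leaf_count col colB).
Proof.
exists #|V|, set0; split=> //; first by rewrite /star_pos eqxx setC0 cardsT leqnn.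
by congr pair; apply: eq_card => i; rewrite !inE andbT.
Qed.

Lemma star_game_eq (S : Type) (R : game -> S -> Prop) mv X c QL QR :
  0 < n -> simulates R mv -> R X c ->
  reply_closed (sum_mv star_mv (neg_mv mv)) true QL ->
  reply_closed (sum_mv star_mv (neg_mv mv)) false QR ->
  QL (leaf_count col colA, leaf_count col colB, c) ->
  QR (leaf_count col colA, leaf_count col colB, c) ->
  game_eq (dom_game adj col) X.
Proof.
move=> n_gt0 simR repX closedL closedR QLs QRs.
have sim := simulates_add (simulates_star n_gt0) (simulates_neg simR).
apply: (simulated_second_player_win sim closedL closedR _ QLs QRs).
by exists (dom_game adj col), (neg X); split; [| apply: star_rep_dom_game | exists X].
Qed.

End Star.

Ltac unfold_moves :=
  rewrite /sum_mv /neg_mv /star_mv /nat_mv /half_mv /upstar_mv /= ?pair_equal_spec.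

Ltac moves_arith := unfold_moves; lia.

Ltac case_move mv :=
  decompose [and or] mv; clear mv;
  repeat match goal with H : ?x = _ |- _ => is_var x; subst x end.

(* A state (x, y, s) of D - X records the undominated A- and B-leaves of the
   star D and the state s of X.  Writing D(x, y) for the value the theorem
   assigns to such a star, [left_loses_*] and [right_loses_*] spell out
   D(x, y) <= X and D(x, y) >= X. *)

Definition left_loses_int (s : nat * nat * nat) :=
  let: (x, y, k) := s in (x = 0 /\ y = 0) \/ (0 < k /\ x <= y + k).

Definition right_loses_int (s : nat * nat * nat) :=
  let: (x, y, k) := s in (k = 0 /\ ~ (x = 0 /\ y = 1)) \/ (0 < k /\ y + k <= x).

Lemma reply_left_loses_int : reply_closed (sum_mv star_mv (neg_mv nat_mv)) true left_loses_int.
Proof.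
move=> [[x y] k] [[x' y'] k'] inv mv.
have [[y0 inv'] | [k0 inv']] :
    (0 < y' /\ left_loses_int (x', y'.-1, k')) \/ (0 < k' /\ left_loses_int (x', y', k'.-1)).
  by move: inv mv; rewrite /left_loses_int; unfold_moves => inv mv; case_move mv; lia.
- by exists (x', y'.-1, k'); first moves_arith.
- by exists (x', y', k'.-1); first moves_arith.
Qed.

Lemma reply_right_loses_int : reply_closed (sum_mv star_mv (neg_mv nat_mv)) false right_loses_int.
Proof.
move=> [[x y] k] [[x' y'] k'] inv mv.
have [[x0 inv'] | [xy0 inv']] :
    (0 < x' /\ right_loses_int (x'.-1, y', k')) \/ (0 < x' + y' /\ right_loses_int (0, 0, k')).
  by move: inv mv; rewrite /right_loses_int; unfold_moves => inv mv; case_move mv; lia.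
- by exists (x'.-1, y', k'); first moves_arith.
- by exists (0, 0, k'); first moves_arith.
Qed.

Definition left_loses_half (s : nat * nat * nat) :=
  let: (x, y, h) := s in
  (0 < h /\ (x = 0 \/ (0 < x <= y /\ h <= y - x + 2) \/ (h = 1 /\ x = y + 1))) \/
  (h = 0 /\ x = 0 /\ y = 0).

Definition right_loses_half (s : nat * nat * nat) :=
  let: (x, y, h) := s in
  (0 < h /\ (y < x \/ (0 < x <= y /\ y - x + 2 <= h))) \/ (h = 0 /\ ~ (x = 0 /\ y = 1)).

Lemma reply_left_loses_half : reply_closed (sum_mv star_mv (neg_mv half_mv)) true left_loses_half.
Proof.
move=> [[x y] h] [[x' y'] h'] inv mv.
have [[y0 inv'] | [h0 inv']] :
    (0 < y' /\ left_loses_half (x', y'.-1, h')) \/ (0 < h' /\ left_loses_half (x', y', 0)).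
  by move: inv mv; rewrite /left_loses_half; unfold_moves => inv mv; case_move mv; lia.
- by exists (x', y'.-1, h'); first moves_arith.
- by exists (x', y', 0); first moves_arith.
Qed.

Lemma reply_right_loses_half :
  reply_closed (sum_mv star_mv (neg_mv half_mv)) false right_loses_half.
Proof.
move=> [[x y] h] [[x' y'] h'] inv mv.
have [[x0 inv'] | [[xy0 inv'] | [h1 inv']]] :
    (0 < x' /\ right_loses_half (x'.-1, y', h')) \/
    (0 < x' + y' /\ right_loses_half (0, 0, h')) \/
    (1 < h' /\ right_loses_half (x', y', h'.-1)).
  by move: inv mv; rewrite /right_loses_half; unfold_moves => inv mv; case_move mv; lia.
- by exists (x'.-1, y', h'); first moves_arith.
- by exists (0, 0, h'); first moves_arith.
- by exists (x', y', h'.-1); first moves_arith.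
Qed.

Lemma nat_ind_mod2 (P : nat -> Prop) :
  P 0 -> P 1 -> (forall k, P k.*2.+2) -> (forall k, P k.*2.+3) -> forall n, P n.
Proof.
move=> P0 P1 Pe Po [|[|n]] //; rewrite -[n]odd_double_half.
by case: (odd n); [rewrite add1n; apply: Po | rewrite add0n; apply: Pe].
Qed.

(* Splitting y and v by parity, with their small values apart so that
   predecessors compute, turns every [odd] into a constant. *)
Ltac parity_lia y v :=
  generalize dependent y; elim/nat_ind_mod2 => [||y|y];
  generalize dependent v; elim/nat_ind_mod2 => [||v|v];
  rewrite ?oddD /= ?odd_double /=; lia.

Definition left_loses_upstar (s : nat * nat * (nat * nat)) :=
  let: (x, y, (u, v)) := s in
  x = 0 /\ ((~~ odd (y + v) /\ y <= u + 1) \/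
            (odd (y + v) /\ ((y = 0 /\ 2 <= u) \/ (0 < y /\ y + 1 <= u)))).

Definition right_loses_upstar (s : nat * nat * (nat * nat)) :=
  let: (x, y, (u, v)) := s in
  x = 0 /\ ((~~ odd (y + v) /\ (u = 0 \/ u + 1 <= y)) \/ (odd (y + v) /\ u + 3 <= y)).

Lemma reply_left_loses_upstar :
  reply_closed (sum_mv star_mv (neg_mv upstar_mv)) true left_loses_upstar.
Proof.
move=> [[x y] [u v]] [[x' y'] [u' v']] inv mv.
have [[y0 inv'] | [[u0 inv'] | [v0 inv']]] :
    (0 < y' /\ left_loses_upstar (x', y'.-1, (u', v'))) \/
    (0 < u' /\ left_loses_upstar (x', y', (u'.-1, v'))) \/
    (0 < v' /\ left_loses_upstar (x', y', (u', v'.-1))).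
  move: inv mv; rewrite /left_loses_upstar; unfold_moves => inv mv.
  by case_move mv; move: inv; parity_lia y v.
- by exists (x', y'.-1, (u', v')); first moves_arith.
- by exists (x', y', (u'.-1, v')); first moves_arith.
- by exists (x', y', (u', v'.-1)); first moves_arith.
Qed.

Lemma reply_right_loses_upstar :
  reply_closed (sum_mv star_mv (neg_mv upstar_mv)) false right_loses_upstar.
Proof.
move=> [[x y] [u v]] [[x' y'] [u' v']] inv mv.
have [[x0 inv'] | [[xy0 inv'] | [[u0 inv'] | [v0 inv']]]] :
    (0 < x' /\ right_loses_upstar (x'.-1, y', (u', v'))) \/
    (0 < x' + y' /\ right_loses_upstar (0, 0, (u', v'))) \/
    (0 < u' /\ right_loses_upstar (x', y', (u'.-1, v'.+1))) \/
    (0 < v' /\ right_loses_upstar (x', y', (u', v'.-1))).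
  move: inv mv; rewrite /right_loses_upstar; unfold_moves => inv mv.
  by case_move mv; move: inv; parity_lia y v.
- by exists (x'.-1, y', (u', v')); first moves_arith.
- by exists (0, 0, (u', v')); first moves_arith.
- by exists (x', y', (u'.-1, v'.+1)); first moves_arith.
- by exists (x', y', (u', v'.-1)); first moves_arith.
Qed.

Theorem theorem6 (n : nat) (col : 'I_n.+1 -> color) :
  2 <= n ->
  (forall i : 'I_n.+1, i != ord0 -> (col i == colA) || (col i == colB)) ->
  let a := leaf_count col colA in
  let b := leaf_count col colB in
  (col ord0 = colA ->
     (b < a -> game_eq (dom_game (@star_adj n) col) (nat_game (a - b))) /\
     (1 <= a <= b -> game_eq (dom_game (@star_adj n) col) (half_pow (b - a + 1))) /\
     (a = 0 -> odd b -> game_eq (dom_game (@star_adj n) col) (add (mul_up b.-1) star)) /\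
     (a = 0 -> ~~ odd b -> game_eq (dom_game (@star_adj n) col) (mul_up b.-1))) /\
  (col ord0 = colB ->
     game_eq (dom_game (@star_adj n) col)
             (neg (dom_game (@star_adj n) (swap_col \o col)))).
Proof.
move=> n2 leaf_AB a b; split; last first.
  by move=> _; rewrite /game_eq /dom_game neg_dom_pos_swap; apply: second_player_win_sub_self.
move=> center_A; have n_gt0 : 0 < n by apply: ltnW.
split; [|split; [|split]].
- move=> ba; apply: (star_game_eq center_A leaf_AB n_gt0 simulates_nat erefl
                      reply_left_loses_int reply_right_loses_int);
    rewrite /left_loses_int /right_loses_int; lia.
- case/andP=> a_gt0 ab; apply: (star_game_eq center_A leaf_AB n_gt0 simulates_half
                                 (c := (b - a + 1).+1) erefl
                                 reply_left_loses_half reply_right_loses_half);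
    rewrite /left_loses_half /right_loses_half; lia.
- move=> a0 b_odd; apply: (star_game_eq center_A leaf_AB n_gt0 simulates_upstar
                             (upstar_add (upstar_rep_mul_up b.-1) upstar_star)
                             reply_left_loses_upstar reply_right_loses_upstar);
    rewrite /left_loses_upstar /right_loses_upstar /=; lia.
- move=> a0 b_even; apply: (star_game_eq center_A leaf_AB n_gt0 simulates_upstar
                              (upstar_rep_mul_up b.-1)
                              reply_left_loses_upstar reply_right_loses_upstar);
    rewrite /left_loses_upstar /right_loses_upstar /=; lia.
Qed.
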